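(* Let $n\ge1$, $I=\{1,\dots,n\}$, and let $x,\sigma_1,\dots,\sigma_n,\tau_1,\dots,\tau_n$ be independent indeterminates; write $\sigma=(\sigma_i)_{i\in I}$, $\tau=(\tau_i)_{i\in I}$. For $j\in I$ let $\beta_j(\sigma,\tau)$ be the multiset $\{\sigma_i-\sigma_j: i\in I\}\cup\{\tau_i+\sigma_j: i\in I\}$, let $\phi_j(x;\sigma,\tau)=\phi(x;\beta_j(\sigma,\tau))$, and $\Phi(x;\sigma,\tau)=\sum_{j\in I}\phi_j(x;\sigma,\tau)$. Then $\Phi(x;\sigma,\tau)=\Phi(x;\tau,\sigma)$, where $\Phi(x;\tau,\sigma)$ is obtained by interchanging the roles of $\sigma$ and $\tau$.
   Context: For a multiset $\beta$, $\phi(x;\beta)=\prod_{b\in\beta,\,b\neq0}\frac{b-x}{b}$ (product with multiplicity over the nonzero elements; here this omits exactly the elements $\sigma_j-\sigma_j=0$). *)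

From mathcomp Require Import all_boot all_order all_algebra.
Set Implicit Arguments. Unset Strict Implicit. Unset Printing Implicit Defensive.
Import GRing.Theory.
Local Open Scope ring_scope.

(* phi(x; beta) = prod over the nonzero elements b of the multiset beta
   (with multiplicity) of (b - x)/b.  Multisets are represented as seqs. *)
Definition phi (F : fieldType) (x : F) (beta : seq F) : F :=
  \prod_(b <- beta | b != 0) ((b - x) / b).

Definition beta_j (F : fieldType) (n : nat) (sigma tau : 'I_n -> F) (j : 'I_n)
  : seq F :=
  [seq sigma i - sigma j | i <- enum 'I_n] ++ [seq tau i + sigma j | i <- enum 'I_n].

Definition phi_j (F : fieldType) (n : nat) (x : F) (sigma tau : 'I_n -> F)
  (j : 'I_n) : F := phi x (beta_j sigma tau j).

Definition Phi (F : fieldType) (n : nat) (x : F) (sigma tau : 'I_n -> F) : F :=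
  \sum_(j < n) phi_j x sigma tau j.

From mathcomp Require Import all_boot all_order all_algebra zify ring.
Set Implicit Arguments. Unset Strict Implicit. Unset Printing Implicit Defensive.
Import GRing.Theory.
Local Open Scope ring_scope.

(* Take the 2n distinct nodes c = (sigma_i) u (-tau_i) and the shifted points
   a = (sigma_i - x) u (-tau_i + x), which have the same sum.  The polynomial
   prod_l (X - a_l) - prod_l (X - c_l) then has degree < 2n and vanishing
   X^(2n-1) coefficient, so by Lagrange interpolation
     sum_k prod_l (c_k - a_l) / prod_(l <> k) (c_k - c_l) = 0.
   The term at the node sigma_j is x * phi_j(x; sigma, tau) and the term at
   -tau_j is -x * phi_j(x; tau, sigma); cancelling x gives the symmetry, while
   for x = 0 every phi_j is 1. *)

Lemma size_monicB (R : nzRingType) (p q : {poly R}) :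
  p \is monic -> q \is monic -> size p = size q -> (size (p - q)%R < size p)%N.
Proof.
move=> mon_p mon_q eq_pq.
have [k sz_p] : exists k, size p = k.+1.
  by exists (size p).-1; rewrite prednK // size_poly_gt0 monic_neq0.
rewrite sz_p; apply/leq_sizeP => j; rewrite leq_eqVlt coefB => /orP [/eqP <-|lt_kj].
  have lead_k (r : {poly R}) : size r = k.+1 -> r`_k = lead_coef r.
    by rewrite lead_coefE => ->.
  by rewrite !lead_k -?eq_pq // (monicP mon_p) (monicP mon_q) subrr.
by rewrite !nth_default ?subrr // -?eq_pq sz_p.
Qed.

Section ProdXsubC.
Variables (R : idomainType) (T : finType).

Lemma size_prod_XsubC_card (P : pred T) (a : T -> R) :
  size (\prod_(l | P l) ('X - (a l)%:P)) = #|P|.+1.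
Proof.
rewrite size_prod => [|l _]; last by rewrite polyXsubC_eq0.
under eq_bigr do rewrite size_XsubC.
by rewrite sum_nat_const; lia.
Qed.

Lemma coef_prod_XsubC_card (a : T -> R) : (0 < #|T|)%N ->
  (\prod_l ('X - (a l)%:P))`_#|T|.-1 = - \sum_l a l.
Proof.
move=> T_gt0; rewrite -(big_map a predT (fun p => 'X - p%:P)).
rewrite -(big_map a predT (fun p => p)).
have sz : size (map a (index_enum T)) = #|T|.
  by rewrite size_map cardT enumT /index_enum unlock.
by rewrite -{1}sz coefPn_prod_XsubC // sz -lt0n.
Qed.

End ProdXsubC.

Section LagrangeInterpolation.
Variables (F : fieldType) (T : finType) (c : T -> F).
Hypothesis c_inj : injective c.

Lemma coef_lagrange (R : {poly F}) : (size R <= #|T|)%N ->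
  R`_#|T|.-1 = \sum_k R.[c k] / \prod_(l | l != k) (c k - c l).
Proof.
move=> szR.
pose d k := \prod_(l | l != k) (c k - c l).
pose B k := \prod_(l | l != k) ('X - (c l)%:P).
have d_neq0 k : d k != 0.
  by apply/prodf_neq0 => l; apply: contraNneq => /subr0_eq /c_inj ->.
have size_B k : size (B k) = #|T|.
  by rewrite size_prod_XsubC_card cardC1 prednK //; apply/card_gt0P; exists k.
have B_node k j : (B k).[c j] = if j == k then d k else 0.
  rewrite horner_prod; under eq_bigr do rewrite hornerXsubC.
  by case: eqP => [-> //|/eqP neq_jk]; rewrite (bigD1 j) //= subrr mul0r.
pose L := \sum_k (R.[c k] / d k) *: B k.
have RL : R = L.
  apply/eqP; rewrite -subr_eq0; apply/eqP.
  apply: (@roots_geq_poly_eq0 _ _ (map c (enum T))).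
  - apply/allP => _ /mapP [j _ ->]; rewrite /root hornerD hornerN horner_sum.
    under eq_bigr do rewrite hornerZ B_node.
    rewrite (bigD1 j) //= eqxx big1 => [|k /negbTE]; last by rewrite eq_sym => ->; rewrite mulr0.
    by rewrite addr0 divfK // subrr.
  - by rewrite map_inj_uniq ?enum_uniq.
  - rewrite size_map -cardE; apply: leq_trans (size_polyD _ _) _.
    rewrite size_polyN geq_max szR; apply: leq_trans (size_sum _ _ _) _.
    by apply/bigmax_leqP => k _; rewrite -(size_B k) size_scale_leq.
rewrite [in LHS]RL coef_sum; apply: eq_bigr => k _.
by rewrite coefZ -(size_B k) -lead_coefE lead_coef_prod_XsubC mulr1.
Qed.

Lemma sum_lagrange_prod_subr_eq0 (a : T -> F) : \sum_k c k = \sum_k a k ->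
  \sum_k (\prod_l (c k - a l)) / \prod_(l | l != k) (c k - c l) = 0.
Proof.
move=> eq_sum; have [/card0_eq T0|T_gt0] := posnP #|T|.
  by rewrite big_pred0 // => k; have := T0 k.
pose P := \prod_l ('X - (a l)%:P); pose Q := \prod_l ('X - (c l)%:P).
have size_PQ : (size (P - Q)%R <= #|T|)%N.
  rewrite -ltnS -(size_prod_XsubC_card predT a).
  by rewrite size_monicB ?monic_prod_XsubC // !size_prod_XsubC_card.
have := coef_lagrange size_PQ.
rewrite coefB !coef_prod_XsubC_card // eq_sum subrr => /esym sum_eq0.
rewrite -[RHS]sum_eq0; apply: eq_bigr => k _; congr (_ / _).
rewrite hornerD hornerN !horner_prod.
rewrite [X in _ - X](bigD1 k) //= hornerXsubC subrr mul0r subr0.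
by apply: eq_bigr => l _; rewrite hornerXsubC.
Qed.

End LagrangeInterpolation.

Lemma prodf_div_bigD1 (F : fieldType) (T : finType) (f g : T -> F) (k : T) :
  (\prod_l f l) / \prod_(l | l != k) g l = f k * \prod_(l | l != k) (f l / g l).
Proof. by rewrite (bigD1 k) //= prodf_div mulrA. Qed.

Lemma phi0 (F : fieldType) (beta : seq F) : phi 0 beta = 1.
Proof. by rewrite /phi big1 // => b b_neq0; rewrite subr0 divff. Qed.

Lemma phi_jE (F : fieldType) (n : nat) (x : F) (s t : 'I_n -> F) (j : 'I_n) :
  (forall i k : 'I_n, i != k -> s i != s k) -> (forall i : 'I_n, t i + s j != 0) ->
  phi_j x s t j = \prod_(i | i != j) ((s i - s j - x) / (s i - s j))
                  * \prod_i ((t i + s j - x) / (t i + s j)).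
Proof.
move=> s_neq st_neq0.
rewrite /phi_j /phi /beta_j big_cat !big_map -!enumT !big_enum_cond /=.
congr (_ * _); apply: eq_bigl => i; last exact: st_neq0.
by rewrite subr_eq0; apply/idP/idP; [apply: contraNneq => -> | apply: s_neq].
Qed.

Section Nodes.
Variables (F : fieldType) (n : nat) (x : F) (sigma tau : 'I_n -> F).
Hypothesis sigma_neq : forall i j : 'I_n, i != j -> sigma i != sigma j.
Hypothesis tau_neq : forall i j : 'I_n, i != j -> tau i != tau j.
Hypothesis tau_sigma_neq0 : forall i j : 'I_n, tau i + sigma j != 0.

Definition node (k : 'I_n + 'I_n) : F :=
  match k with inl i => sigma i | inr i => - tau i end.

Definition shifted_node (k : 'I_n + 'I_n) : F :=
  match k with inl i => sigma i - x | inr i => - tau i + x end.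

Lemma node_inj : injective node.
Proof.
case=> [i|i] [j|j] /= eq_ij.
- by have [->//|/sigma_neq] := eqVneq i j; rewrite eq_ij eqxx.
- by have := tau_sigma_neq0 j i; rewrite eq_ij addrN eqxx.
- by have := tau_sigma_neq0 i j; rewrite -eq_ij addrN eqxx.
- by have [->//|/tau_neq] := eqVneq i j; rewrite (oppr_inj eq_ij) eqxx.
Qed.

Lemma sum_shifted_node : \sum_k node k = \sum_k shifted_node k.
Proof. by rewrite !big_sumType /= !big_split /= !sumrN; ring. Qed.

Lemma lagrange_node_inl (j : 'I_n) :
  (\prod_l (node (inl j) - shifted_node l)) / \prod_(l | l != inl j) (node (inl j) - node l)
  = x * phi_j x sigma tau j.
Proof.
rewrite prodf_div_bigD1 phi_jE // big_sumType /=.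
have -> : sigma j - (sigma j - x) = x by ring.
congr (x * (_ * _)); apply: eq_big => // i _.
  by rewrite -divrNN; congr (_ / _); ring.
by congr (_ / _); ring.
Qed.

Lemma lagrange_node_inr (j : 'I_n) :
  (\prod_l (node (inr j) - shifted_node l)) / \prod_(l | l != inr j) (node (inr j) - node l)
  = - x * phi_j x tau sigma j.
Proof.
have sigma_tau_neq0 i : sigma i + tau j != 0 by rewrite addrC.
rewrite prodf_div_bigD1 phi_jE // big_sumType /= [X in _ = _ * X]mulrC.
have -> : - tau j - (- tau j + x) = - x by ring.
congr (- x * (_ * _)); apply: eq_big => // i _.
  by rewrite -divrNN; congr (_ / _); ring.
by congr (_ / _); ring.
Qed.

End Nodes.

Theorem lemma4p3 (F : fieldType) (n : nat) (hn : (0 < n)%N)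
  (x : F) (sigma tau : 'I_n -> F)
  (hs : forall i j : 'I_n, i != j -> sigma i != sigma j)
  (ht : forall i j : 'I_n, i != j -> tau i != tau j)
  (hst : forall i j : 'I_n, tau i + sigma j != 0) :
  Phi x sigma tau = Phi x tau sigma.
Proof.
have [->|x_neq0] := eqVneq x 0.
  by apply: eq_bigr => j _; rewrite /phi_j !phi0.
have := sum_lagrange_prod_subr_eq0 (node_inj hs ht hst) (sum_shifted_node x sigma tau).
rewrite big_sumType /=.
under eq_bigr do rewrite lagrange_node_inl //.
under [X in _ + X]eq_bigr do rewrite lagrange_node_inr //.
rewrite -!mulr_sumr mulNr => /eqP; rewrite subr_eq0 => /eqP.
exact: mulfI.
Qed.
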